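(* Let $\gamma_1$ and $\gamma_2$ be functorials satisfying (F1) and (F2). Then $\gamma_2\star\gamma_1$ satisfies (F1) and (F2). If moreover $\gamma_1$ and $\gamma_2$ also satisfy (F5), then $\gamma_2\star\gamma_1$ satisfies (F5).
   Context: All groups are finite. A functorial is a function $\theta$ assigning to each group $G$ a characteristic subgroup $\theta(G)$ such that $f(\theta(G))=\theta(f(G))$ for every isomorphism $f:G\to G^*$. Conditions (for every group $G$): (F1) $f(\gamma(G))\subseteq\gamma(f(G))$ for every epimorphism $f:G\to G^*$; (F2) $\gamma(N)\subseteq\gamma(G)$ for every $N\trianglelefteq G$; (F5) $\gamma(G)\cap N\subseteq\gamma(N)$ for every $N\trianglelefteq G$. The upper product $(\gamma_2\star\gamma_1)(G)$ is the subgroup containing $\gamma_2(G)$ with $(\gamma_2\star\gamma_1)(G)/\gamma_2(G)=\gamma_1(G/\gamma_2(G))$. *)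

From mathcomp Require Import all_boot all_fingroup all_solvable.
Set Implicit Arguments. Unset Strict Implicit. Unset Printing Implicit Defensive.
Local Open Scope group_scope.

Notation omap := GFunctor.object_map.

Definition functorial (theta : omap) : Prop :=
  (forall (gT : finGroupType) (G : {group gT}),
      group_set (theta gT G) /\ theta gT G \char G) /\
  (forall (gT hT : finGroupType) (G : {group gT}) (f : {morphism G >-> hT}),
      'injm f -> f @* (theta gT G) = theta hT (f @* G)).

Definition condF1 (gamma : omap) : Prop :=
  forall (gT hT : finGroupType) (G : {group gT}) (f : {morphism G >-> hT}),
    f @* (gamma gT G) \subset gamma hT (f @* G).

Definition condF2 (gamma : omap) : Prop :=
  forall (gT : finGroupType) (N G : {group gT}),
    N <| G -> gamma gT N \subset gamma gT G.

Definition condF5 (gamma : omap) : Prop :=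
  forall (gT : finGroupType) (N G : {group gT}),
    N <| G -> gamma gT G :&: N \subset gamma gT N.

(* Upper product (gamma2 * gamma1)(G) = preimage of gamma1(G/gamma2(G)) under
   the canonical projection G -> G/gamma2(G). *)
Definition upper_product (gamma2 gamma1 : omap) : omap :=
  GFunctor.modulo gamma1 gamma2.

From mathcomp Require Import all_boot all_fingroup all_solvable.
Set Implicit Arguments. Unset Strict Implicit. Unset Printing Implicit Defensive.
Local Open Scope group_scope.

(* All three properties of the upper product come from one observation:
   if f : G -> R maps A into B, it induces a morphism G/A -> f(G)/B, which
   by (F1) carries gamma1(G/A) into gamma1(f(G)/B).  For (F1) apply it to an
   epimorphism f with A = gamma2(G), B = gamma2(f(G)); for (F2) and (F5)
   apply it to the identity of N, comparing N/gamma2(N) and N/gamma2(G) in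
   one direction or the other. *)

Lemma quotient_morphim_subF (F : GFunctor.map) (gT rT : finGroupType)
    (G A : {group gT}) (B : {group rT}) (f : {morphism G >-> rT}) (H : {set gT}) :
    G \subset 'N(A) -> f @* G \subset 'N(B) -> f @* (G :&: A) \subset B ->
  H \subset G -> H / A \subset F _ (G / A) -> f @* H / B \subset F _ (f @* G / B).
Proof.
move=> nAG nBfG sfAB sHG sHAF.
have dom_g : G \subset 'dom (coset B \o f) by rewrite -sub_morphim_pre.
pose q := restrm nAG (coset A); pose g := restrm dom_g (coset B \o f).
have sKqKg : 'ker q \subset 'ker g.
  rewrite !ker_restrm ker_comp /= !ker_coset subsetI subsetIl.
  by rewrite -sub_morphim_pre ?subsetIl.
have q_quotient (K : {set gT}) : K \subset G -> q @* K = K / A.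
  by move=> sKG; rewrite morphim_restrm (setIidPr sKG).
have g_quotient (K : {set gT}) : K \subset G -> g @* K = f @* K / B.
  by move=> sKG; rewrite morphim_restrm (setIidPr sKG) morphim_comp.
pose phi := factm sKqKg (subxx G).
have phiE (K : {set gT}) : K \subset G -> phi @* (K / A) = f @* K / B.
  by move=> sKG; rewrite -q_quotient // morphim_factm g_quotient.
rewrite -!phiE //; apply: subset_trans (morphimS _ sHAF) (morphimF _ _ _).
by rewrite /= q_quotient.
Qed.

Lemma quotient_subF (F : GFunctor.map) (gT : finGroupType) (N A B : {group gT})
    (H : {set gT}) :
    N \subset 'N(A) -> N \subset 'N(B) -> N :&: A \subset B ->
  H \subset N -> H / A \subset F _ (N / A) -> H / B \subset F _ (N / B).
Proof.
move=> nAN nBN sNAB sHN.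
have := quotient_morphim_subF (F := F) (B := B) (f := idm N) (H := H) nAN.
by rewrite !morphim_idm ?subsetIl //; apply.
Qed.

Section Modulo.

Variables F1 F2 : GFunctor.map.

Lemma gFmod_sub (gT : finGroupType) (G : {group gT}) : (F1 %% F2)%gF gT G \subset G.
Proof. by rewrite sub_cosetpre_quo ?gFsub ?gFnormal. Qed.

Lemma gFmod_continuous : GFunctor.continuous (F1 %% F2).
Proof.
move=> gT rT G f; have sMG := gFmod_sub G.
rewrite -sub_quotient_pre; last exact: subset_trans (morphimS f sMG) (gFnorm _ _).
apply: (quotient_morphim_subF (A := F2 _ G) (B := F2 _ (f @* G))) sMG _;
  rewrite ?gFnorm ?cosetpreK //.
by rewrite (setIidPr (gFsub _ _)) gFcont.
Qed.

Lemma gFmod_condF2 : condF2 F1 -> condF2 F2 -> condF2 (F1 %% F2).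
Proof.
move=> monoF1 monoF2 gT N G nsNG; have sNG := normal_sub nsNG.
have sMN := gFmod_sub N; have nF2G_N := subset_trans sNG (gFnorm F2 G).
rewrite -sub_quotient_pre; last exact: subset_trans sMN nF2G_N.
apply: subset_trans (monoF1 _ _ _ (quotient_normal _ nsNG)).
apply: (quotient_subF (A := F2 _ N)) sMN _; rewrite ?gFnorm ?cosetpreK //.
exact: subset_trans (subsetIr _ _) (monoF2 _ _ _ nsNG).
Qed.

Lemma gFmod_condF5 : condF5 F1 -> condF5 F2 -> condF5 (F1 %% F2).
Proof.
move=> herF1 herF2 gT N G nsNG; have sNG := normal_sub nsNG.
have sMGN_N : (F1 %% F2)%gF gT G :&: N \subset N := subsetIr _ _.
rewrite -sub_quotient_pre; last exact: subset_trans sMGN_N (gFnorm F2 N).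
apply: (quotient_subF (A := F2 _ G)) sMGN_N _; rewrite ?gFnorm //.
- exact: subset_trans sNG (gFnorm F2 G).
- by rewrite setIC herF2.
apply: subset_trans (herF1 _ _ _ (quotient_normal _ nsNG)).
by apply: subset_trans (quotientI _ _ _) _; rewrite cosetpreK.
Qed.

End Modulo.

Definition gFun_of_functorial (gamma : GFunctor.object_map)
    (gammaF : functorial gamma) (gamma_cont : condF1 gamma) : GFunctor.map :=
  @GFunctor.Map
    (@GFunctor.IsoMap gamma (fun gT G => proj1 (proj1 gammaF gT G))
       (fun gT G => char_sub (proj2 (proj1 gammaF gT G)))
       (GFunctor.continuous_is_iso_continuous gamma_cont))
    gamma_cont.

Theorem proposition3 (gamma1 gamma2 : GFunctor.object_map) :
  functorial gamma1 -> functorial gamma2 ->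
  condF1 gamma1 -> condF2 gamma1 -> condF1 gamma2 -> condF2 gamma2 ->
  (condF1 (upper_product gamma2 gamma1) /\ condF2 (upper_product gamma2 gamma1)) /\
  (condF5 gamma1 -> condF5 gamma2 -> condF5 (upper_product gamma2 gamma1)).
Proof.
move=> fun1 fun2 cont1 mono1 cont2 mono2.
pose F1 := gFun_of_functorial fun1 cont1; pose F2 := gFun_of_functorial fun2 cont2.
split; first split.
- exact: (gFmod_continuous F1 F2).
- exact: (@gFmod_condF2 F1 F2).
- exact: (@gFmod_condF5 F1 F2).
Qed.
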